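(* Let $M\in\{0,1\}^{m\times n}$, $N=m+n$, $p=|M|/(mn)$, and let $A$ be the symmetrization of $M$ with eigenvalues $\lambda_1\geq\dots\geq\lambda_N$ and an orthonormal basis of corresponding eigenvectors $v_1,\dots,v_N$ chosen so that $v_i(j)=f(j)\,v_{N+1-i}(j)$ for all $i,j\in[N]$, where $f(j)=1$ for $j\in[m]$ and $f(j)=-1$ for $j\in[m+1,N]$. Let $a_1,\dots,a_N\geq 0$ and $X=\sum_{i=1}^N a_i v_iv_i^T$. Then $$\operatorname{disc}(X)\geq \sum_{i=1}^N a_i\lambda_i-\frac{pN}{2}\max_i(a_i+a_{N+1-i}).$$
   Context: $|M|$ is the number of $1$ entries of $M$. The symmetrization of $M$ is the symmetric matrix $A\in\mathbb{R}^{N\times N}$ with $A_{i,j+m}=A_{j+m,i}=M_{i,j}$ for $(i,j)\in[m]\times[n]$ and all other entries $0$ (the adjacency matrix of the bipartite graph of $M$); its spectrum is symmetric, $\lambda_i=-\lambda_{N+1-i}$, and eigenvectors can be chosen with the stated sign relation. $L\in\mathbb{R}^{N\times N}$ is the adjacency matrix of the complete bipartite graph with parts $[m]$ and $[m+1,N]$. For $X\in\mathbb{R}^{N\times N}$, $\operatorname{disc}(X)=\langle X,A\rangle-p\langle X,L\rangle$ with $\langle\cdot,\cdot\rangle$ the entrywise inner product. *)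

From HB Require Import structures.
From mathcomp Require Import all_boot all_order all_algebra.
Set Implicit Arguments. Unset Strict Implicit. Unset Printing Implicit Defensive.
Import Order.TTheory GRing.Theory Num.Theory.
Local Open Scope ring_scope.

Section Defs.
Variable R : realFieldType.

Definition symmetrization (m n : nat) (M : 'M[R]_(m, n)) : 'M[R]_(m + n) :=
  block_mx 0 M M^T 0.

Definition Kbip (m n : nat) : 'M[R]_(m + n) :=
  block_mx 0 (const_mx 1) (const_mx 1) 0.

Definition ones_count (m n : nat) (M : 'M[R]_(m, n)) : R :=
  \sum_(i < m) \sum_(j < n) M i j.

Definition density (m n : nat) (M : 'M[R]_(m, n)) : R :=
  ones_count M / (m * n)%:R.

Definition mxinner (k : nat) (X Y : 'M[R]_k) : R :=
  \sum_(i < k) \sum_(j < k) X i j * Y i j.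

Definition disc (m n : nat) (M : 'M[R]_(m, n)) (X : 'M[R]_(m + n)) : R :=
  mxinner X (symmetrization M) - density M * mxinner X (Kbip m n).

(* f(j) = 1 for j in [m], -1 for j in [m+1, N] (0-based: j < m) *)
Definition fsign (m n : nat) (j : 'I_(m + n)) : R :=
  if (j < m)%N then 1 else -1.

End Defs.

From HB Require Import structures.
From mathcomp Require Import all_boot all_order all_algebra lra.
Set Implicit Arguments. Unset Strict Implicit. Unset Printing Implicit Defensive.
Import Order.TTheory GRing.Theory Num.Theory.
Local Open Scope ring_scope.

(* Writing X = \sum_i a_i v_i v_i^T, the inner products of X with A and L
   become weighted sums of the quadratic forms v_i^T A v_i = lambda_i and
   v_i^T L v_i.  Since L = (J - f f^T) / 2 with J the all-ones matrix,
   v^T L v <= (1^T v)^2 / 2, and by Parseval \sum_i (1^T v_i)^2 = 1^T 1 = N.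
   Hence \sum_i a_i v_i^T L v_i <= (N / 2) max_i a_i, and a_i <= a_i + a_(N+1-i)
   because the weights are nonnegative. *)

Section QuadraticForms.
Variables (R : realFieldType) (N : nat).
Implicit Types (X Y : 'M[R]_N) (u v : 'cV[R]_N).

Definition qform Y v : R := (v^T *m Y *m v) 0 0.

Lemma mxinnerE X Y : mxinner X Y = \tr (X^T *m Y).
Proof.
rewrite /mxinner /mxtrace exchange_big /=; apply: eq_bigr => i _.
by rewrite mxE; apply: eq_bigr => j _; rewrite mxE.
Qed.

Lemma mxinner_outer_sum (a : 'I_N -> R) (v : 'I_N -> 'cV[R]_N) Y :
  mxinner (\sum_i a i *: (v i *m (v i)^T)) Y = \sum_i a i * qform Y (v i).
Proof.
rewrite mxinnerE !linear_sum mulmx_suml linear_sum; apply: eq_bigr => i _.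
rewrite /= linearZ -scalemxAl linearZ /= trmx_mul trmxK -mulmxA mxtrace_mulC.
by rewrite trace_mx11.
Qed.

Lemma qform_eigen Y v (l : R) :
  Y *m v = l *: v -> v^T *m v = 1%:M -> qform Y v = l.
Proof. by move=> Yv vv; rewrite /qform -mulmxA Yv -scalemxAr vv !mxE eqxx mulr1. Qed.

Lemma qform_outer u v : qform (u *m u^T) v = (u^T *m v) 0 0 ^+ 2.
Proof.
have vu : v^T *m u = (u^T *m v)^T by rewrite trmx_mul trmxK.
by rewrite /qform mulmxA -mulmxA vu mxE big_ord1 mxE expr2.
Qed.

Lemma qform_scale_sub (c : R) Y Y' v :
  qform (c *: (Y - Y')) v = c * (qform Y v - qform Y' v).
Proof. by rewrite /qform -scalemxAr mulmxBr -scalemxAl mulmxBl !mxE. Qed.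

Lemma sum_sqr_dot_orthonormal (v : 'I_N -> 'cV[R]_N) u :
  (forall i j, (v i)^T *m v j = (i == j)%:R%:M) ->
  \sum_i (u^T *m v i) 0 0 ^+ 2 = (u^T *m u) 0 0.
Proof.
move=> ortho; pose V : 'M[R]_N := \matrix_(j, i) v i j 0.
have VtV : V^T *m V = 1%:M.
  apply/matrixP => i k; rewrite !mxE; move/matrixP: (ortho i k) => /(_ 0 0).
  by rewrite !mxE eqxx mulr1n => <-; apply: eq_bigr => j _; rewrite !mxE.
have coord i : (V^T *m u) i 0 = (u^T *m v i) 0 0.
  by rewrite !mxE; apply: eq_bigr => j _; rewrite !mxE mulrC.
transitivity (((V^T *m u)^T *m (V^T *m u)) 0 0).
  rewrite [RHS]mxE; apply: eq_bigr => i _.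
  by rewrite -coord expr2 [_^T 0 i]mxE.
by rewrite trmx_mul trmxK mulmxA -(mulmxA _ V) (mulmx1C VtV) mulmx1.
Qed.

End QuadraticForms.

Section CompleteBipartite.
Variables (R : realFieldType) (m n : nat).

Let ones : 'cV[R]_(m + n) := const_mx 1.
Let fvec : 'cV[R]_(m + n) := \col_j fsign R j.

Lemma Kbip_outer : Kbip R m n = 2^-1 *: (ones *m ones^T - fvec *m fvec^T).
Proof.
apply/matrixP => j k; rewrite /Kbip -(splitK j) -(splitK k).
case: (split j) => j'; case: (split k) => k' /=;
  rewrite ?block_mxEul ?block_mxEur ?block_mxEdl ?block_mxEdr !mxE !big_ord1 !mxE
          /fsign /= ?ltn_ord ?ltnNge ?leq_addr /=; lra.
Qed.

Lemma qform_Kbip_le (v : 'cV[R]_(m + n)) :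
  qform (Kbip R m n) v <= (ones^T *m v) 0 0 ^+ 2 / 2.
Proof.
rewrite Kbip_outer qform_scale_sub !qform_outer.
have := sqr_ge0 ((fvec^T *m v) 0 0); lra.
Qed.

Lemma sum_qform_Kbip_le (v : 'I_(m + n) -> 'cV[R]_(m + n)) (a : 'I_(m + n) -> R)
    (c : R) :
  (forall i j, (v i)^T *m v j = (i == j)%:R%:M) ->
  (forall i, 0 <= a i <= c) ->
  \sum_i a i * qform (Kbip R m n) (v i) <= (m + n)%:R / 2 * c.
Proof.
move=> ortho a_bnd.
have ones_norm : (ones^T *m ones) 0 0 = (m + n)%:R.
  by rewrite mxE (eq_bigr (fun=> 1)) ?sumr_const ?card_ord // => j _; rewrite !mxE mulr1.
rewrite -ones_norm -(sum_sqr_dot_orthonormal ones ortho) !mulr_suml.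
apply: ler_sum => i _; have /andP[a0 ac] := a_bnd i.
apply: le_trans (ler_wpM2l a0 (qform_Kbip_le (v i))) _.
have := sqr_ge0 ((ones^T *m v i) 0 0); nra.
Qed.

End CompleteBipartite.

Lemma density_ge0 (R : realFieldType) (m n : nat) (M : 'M[R]_(m, n)) :
  (forall i j, 0 <= M i j) -> 0 <= density M.
Proof.
move=> M0; rewrite divr_ge0 ?ler0n //.
by apply: sumr_ge0 => i _; apply: sumr_ge0.
Qed.

Theorem lemma3p1 (R : realFieldType) (m n : nat) (M : 'M[R]_(m, n))
  (lambda : 'I_(m + n) -> R) (v : 'I_(m + n) -> 'cV[R]_(m + n))
  (a : 'I_(m + n) -> R) :
  (forall i j, M i j = 0 \/ M i j = 1) ->
  (* v i is an eigenvector of the symmetrization with eigenvalue lambda i *)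
  (forall i, symmetrization M *m v i = lambda i *: v i) ->
  (* orthonormality *)
  (forall i j, (v i)^T *m v j = ((i == j)%:R)%:M) ->
  (* lambda_1 >= ... >= lambda_N *)
  (forall i j : 'I_(m + n), (i <= j)%N -> lambda j <= lambda i) ->
  (* v_i(j) = f(j) v_{N+1-i}(j) *)
  (forall i j, v i j 0 = @fsign R m n j * v (rev_ord i) j 0) ->
  (forall i, 0 <= a i) ->
  @disc R m n M (\sum_(i < m + n) a i *: (v i *m (v i)^T))
    >= \sum_(i < m + n) a i * lambda i
       - density M * (m + n)%:R / 2
         * \big[Num.max/0]_(i < m + n) (a i + a (rev_ord i)).
Proof.
move=> M01 eigen ortho _ _ a0.
have p0 : 0 <= density M by apply: density_ge0 => i j; case: (M01 i j) => ->.
have a_le_max i : 0 <= a i <= \big[Num.max/0]_k (a k + a (rev_ord k)).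
  by rewrite a0 /=; apply: le_trans (le_bigmax _ _ i); rewrite lerDl.
have sym_qform : \sum_i a i * qform (symmetrization M) (v i) = \sum_i a i * lambda i.
  by apply: eq_bigr => i _; rewrite (qform_eigen (eigen i)) // ortho eqxx.
rewrite /disc !mxinner_outer_sum sym_qform lerB //.
by have := ler_wpM2l p0 (sum_qform_Kbip_le ortho a_le_max); rewrite !mulrA.
Qed.
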